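(* Let $W\subseteq T^*Q$ be a subbundle, $\mathfrak H$ a quadratic form on $T^*Q$, $h,\hat h:Q\to\mathbb R$ smooth functions, $\hat W$ a complement of $W$ with projections $\hat{\mathfrak p}:T^*Q\to\hat W$, $\mathfrak p:T^*Q\to W$, and $\mathfrak K$, $\mathfrak L$ quadratic forms on $\hat W$ and $W$ respectively. Put $\hat{\mathfrak H}=\mathfrak K\circ\hat{\mathfrak p}+\mathfrak L\circ\mathfrak p$. Then $\mathbb F(\mathfrak L\circ\mathfrak p)(\sigma)=0$ for all $\sigma\in\hat W$, and the potential equation $$\big(\mathrm d\hat h\circ\mathbb F\mathfrak H-\mathrm dh\circ\mathbb F\hat{\mathfrak H}\big)\circ(\mathbb F\hat{\mathfrak H})^{-1}(\mathsf v)=0\quad\forall\,\mathsf v\in W^\circ$$ holds if and only if $$\big(\mathrm d\hat h\circ\mathbb F\mathfrak H-\mathrm dh\circ\mathbb F(\mathfrak K\circ\hat{\mathfrak p})\big)(\sigma)=0\quad\forall\,\sigma\in\hat W.$$ In particular the potential equation does not depend on $\mathfrak L$.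
   Context: $Q$ is a smooth connected manifold of dimension $n$, $\pi:T^*Q\to Q$ its cotangent bundle, $\langle\cdot,\cdot\rangle$ the pairing between $T_q^*Q$ and $T_qQ$. For a smooth vector subbundle $V\subseteq T^*Q$, a quadratic form on $V$ is a function $\mathfrak F(\alpha)=\tfrac12\langle\alpha,\rho^\sharp(\alpha)\rangle$ with $\rho$ a smooth fibered positive-definite inner product on $V^*$, $\rho^\flat:V^*\to V$ given by $\langle\rho^\flat(u),v\rangle=\rho(u,v)$, $\rho^\sharp=(\rho^\flat)^{-1}$. A complement of $W$ is a smooth subbundle $\hat W$ with $T^*Q=\hat W\oplus W$. $W^\circ\subseteq TQ$ is the annihilator of $W$. The fiber derivative of a smooth $f:T^*Q\to\mathbb R$ is $\mathbb Ff:T^*Q\to TQ$ with $\langle\beta,\mathbb Ff(\alpha)\rangle=\frac{d}{dt}f(\alpha+t\beta)|_{t=0}$ ($\alpha,\beta\in T_q^*Q$); for a quadratic form $\mathfrak F$ on $T^*Q$, $\mathbb F\mathfrak F=\rho^\sharp$ is a bundle isomorphism. For a smooth function $g$ on $Q$ and a fiber-preserving map $F:T^*Q\to TQ$, $\mathrm dg\circ F$ denotes $\alpha\mapsto\langle \mathrm dg(\pi(\alpha)),F(\alpha)\rangle$. *)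

From mathcomp Require Import ssreflect ssrfun ssrbool eqtype ssrnat fintype bigop.
From Stdlib Require Import Reals ClassicalEpsilon.

Set Implicit Arguments.
Unset Strict Implicit.

(* Fiberwise model at a point q of Q (dim Q = n):
   T_q^*Q = Cov n = R^n, T_qQ = Vec n = R^n, pairing = dot product. *)
Definition Cov (n : nat) := 'I_n -> R.
Definition Vec (n : nat) := 'I_n -> R.

Definition zerov {n} : 'I_n -> R := fun _ => 0%R.
Definition addv {n} (a b : 'I_n -> R) : 'I_n -> R := fun i => (a i + b i)%R.
Definition scalev {n} (t : R) (a : 'I_n -> R) : 'I_n -> R := fun i => (t * a i)%R.

Definition pairing {n} (a : Cov n) (v : Vec n) : R :=
  \big[Rplus/0%R]_(i < n) (a i * v i)%R.

(* a linear subspace of T_q^*Q (fiber of a subbundle) *)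
Definition subspace {n} (V : Cov n -> Prop) : Prop :=
  V zerov /\ (forall a b, V a -> V b -> V (addv a b)) /\
  (forall t a, V a -> V (scalev t a)).

Definition fullspace {n} : Cov n -> Prop := fun _ => True.

Definition annihilator {n} (W : Cov n -> Prop) (v : Vec n) : Prop :=
  forall a, W a -> pairing a v = 0%R.

(* Quadratic form on V: F(a) = 1/2 <a, rho^#(a)> with rho a positive-definite
   inner product on V^*. Writing B(a,b) := <a, rho^#(b)> (= rho(rho^# a, rho^# b)),
   this says: F(a) = 1/2 B(a,a) on V with B bilinear, symmetric, positive
   definite on V. *)
Definition quad_form {n} (V : Cov n -> Prop) (F : Cov n -> R) : Prop :=
  exists B : Cov n -> Cov n -> R,
    (forall a b c, V a -> V b -> V c -> B (addv a b) c = (B a c + B b c)%R) /\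
    (forall t a c, V a -> V c -> B (scalev t a) c = (t * B a c)%R) /\
    (forall a b, V a -> V b -> B a b = B b a) /\
    (forall a, V a -> a <> zerov -> (0 < B a a)%R) /\
    (forall a, V a -> F a = (/2 * B a a)%R).

Definition is_fiber_deriv {n} (f : Cov n -> R) (a : Cov n) (v : Vec n) : Prop :=
  forall b : Cov n,
    derivable_pt_lim (fun t => f (addv a (scalev t b))) 0%R (pairing b v).

Definition FD {n} (f : Cov n -> R) (a : Cov n) : Vec n :=
  epsilon (inhabits (@zerov n)) (fun v => is_fiber_deriv f a v).

Definition FDinv {n} (f : Cov n -> R) (v : Vec n) : Cov n :=
  epsilon (inhabits (@zerov n)) (fun a => FD f a = v).

(* All statements are fiberwise, so this is linear algebra on R^n. A quadratic
   form F with bilinear form B, precomposed with a linear projection P, has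
   fiber derivative a |-> B (P a) (P .); hence F(L o p) vanishes on What, where
   p does. The fiber derivative of Hh is a |-> BK (ph a) (ph .) + BL (p a) (p .):
   it is linear and, by positive definiteness, injective, hence bijective. It
   maps What exactly onto the annihilator of W and agrees there with F(K o ph),
   so substituting v = F Hh (s) turns the potential equation into the condition
   on What. *)
From mathcomp Require Import ssreflect ssrfun ssrbool eqtype ssrnat fintype bigop.
From Stdlib Require Import Reals ClassicalEpsilon FunctionalExtensionality Classical Lra.
From mathcomp Require Import ssralg matrix mxalgebra Rstruct.
Import GRing.Theory.

Set Implicit Arguments.
Unset Strict Implicit.

Delimit Scope ring_scope with ring.
Delimit Scope R_scope with R.
Open Scope R_scope.

Ltac vec_ring :=
  apply: functional_extensionality => ?; cbv [addv scalev zerov]; ring.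

Section Vectors.
Variable n : nat.
Implicit Types (a b : Cov n) (v w : Vec n).

Definition basis (j : 'I_n) : Cov n := fun i => if i == j then 1 else 0.

Definition linear_fun (f : Cov n -> Vec n) :=
  (forall a b, f (addv a b) = addv (f a) (f b)) /\
  (forall t a, f (scalev t a) = scalev t (f a)).

Lemma pairingE a v : pairing a v = (\sum_(i < n) a i * v i)%ring.
Proof. by []. Qed.

Lemma pairing_basisl j v : pairing (basis j) v = v j.
Proof.
rewrite pairingE (bigD1 j) //= big1 /basis ?eqxx; first by rewrite mul1r addr0.
by move=> i /negbTE ->; rewrite mul0r.
Qed.

Lemma pairing_addr a v w : pairing a (addv v w) = pairing a v + pairing a w.
Proof. by rewrite !pairingE -big_split; apply: eq_bigr => i _; rewrite mulrDr. Qed.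

Lemma pairing_scaler a t v : pairing a (scalev t v) = t * pairing a v.
Proof.
rewrite !pairingE; change (\sum_(i < n) a i * scalev t v i = t * \sum_(i < n) a i * v i)%ring.
rewrite mulr_sumr; apply: eq_bigr => i _.
by rewrite /scalev mulrCA.
Qed.

Lemma pairing_zeror a : pairing a zerov = 0.
Proof. by rewrite pairingE big1 // => i _; rewrite mulr0. Qed.

Lemma pairing_inj v w : (forall b, pairing b v = pairing b w) -> v = w.
Proof.
by move=> h; apply: functional_extensionality => j; rewrite -!pairing_basisl.
Qed.

Lemma basis_decomposition b : b = \big[addv/zerov]_(j < n) scalev (b j) (basis j).
Proof.
apply: functional_extensionality => i.
rewrite (big_morph (fun f : Cov n => f i) (id1 := 0) (op1 := Rplus)) //.
change (b i = \sum_(j < n) b j * basis j i)%ring.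
rewrite (bigD1 i) //= big1 /basis ?eqxx; first by rewrite mulr1 addr0.
by move=> j /negbTE; rewrite eq_sym => ->; rewrite mulr0.
Qed.

Lemma linear_form_pairing (g : Cov n -> R) :
  (forall a b, g (addv a b) = g a + g b) -> (forall t a, g (scalev t a) = t * g a) ->
  forall b, g b = pairing b (fun j => g (basis j)).
Proof.
move=> gD gZ b.
have g0 : g zerov = 0.
  by rewrite (_ : zerov = scalev 0 zerov) ?gZ ?Rmult_0_l //; vec_ring.
rewrite {1}(basis_decomposition b) (big_morph g (id1 := 0) (op1 := Rplus)) //.
by apply: eq_bigr => j _; rewrite gZ.
Qed.

Lemma linear_inj_surj (f : Cov n -> Vec n) :
  linear_fun f -> (forall a, f a = zerov -> a = zerov) -> forall v, exists a, f a = v.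
Proof.
move=> [fD fZ] fK v.
pose M : 'M[R]_n := (\matrix_(i, j) f (basis i) j)%ring.
have fM a j : f a j = ((\row_i a i) *m M)%ring ord0 j.
  rewrite (@linear_form_pairing (fun a => f a j)) => [|x y|t x]; last by rewrite fZ.
  - by rewrite mxE pairingE; apply: eq_bigr => i _; rewrite !mxE.
  - by rewrite fD.
have Munit : M \in unitmx.
  rewrite unitmxE unitfE; apply/negP => /det0P [u u_neq0 uM].
  have u0 : (fun i => u ord0 i) = zerov.
    apply: fK; apply: functional_extensionality => j.
    by rewrite fM (_ : (\row_i u ord0 i)%ring = u) ?uM ?mxE //; apply/rowP => i; rewrite mxE.
  by move/negP: u_neq0; apply; apply/eqP/rowP => i; rewrite mxE (congr1 (@^~ i) u0).
exists (fun i => ((\row_i v i) *m invmx M)%ring ord0 i).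
apply: functional_extensionality => j; rewrite fM.
rewrite (_ : (\row_i _ = (\row_i v i) *m invmx M)%ring); last by apply/rowP => i; rewrite mxE.
by rewrite mulmxKV // mxE.
Qed.

Lemma derivable_pt_lim_quadratic (d k c : R) :
  derivable_pt_lim (fun t => d + t * k + t * t * c) 0 k.
Proof.
have hid := derivable_pt_lim_id 0.
have hsq := derivable_pt_lim_mult id id 0 1 1 hid hid.
have hlin := derivable_pt_lim_scal id k 0 1 hid.
have h := derivable_pt_lim_plus _ _ 0 _ _
  (derivable_pt_lim_plus _ _ 0 _ _ (derivable_pt_lim_const d 0) hlin)
  (derivable_pt_lim_scal (mult_fct id id) c 0 _ hsq).
rewrite (_ : 0 + k * 1 + c * (1 * id 0 + id 0 * 1) = k) in h; last by rewrite /id; ring.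
apply: (derivable_pt_lim_ext _ _ _ _ _ h) => z.
by rewrite /plus_fct /mult_real_fct /mult_fct /fct_cte /id; ring.
Qed.

Lemma FD_quadratic_expansion (f : Cov n -> R) a v :
  (forall b, exists c, forall t,
      f (addv a (scalev t b)) = f a + t * pairing b v + t * t * c) ->
  FD f a = v.
Proof.
move=> hf.
have hv : is_fiber_deriv f a v.
  move=> b; have [c hc] := hf b.
  apply: (derivable_pt_lim_ext _ _ _ _ _ (derivable_pt_lim_quadratic (f a) _ c)) => t.
  by rewrite hc.
have hFD := epsilon_spec (inhabits (@zerov n)) _ (ex_intro _ v hv).
by apply: pairing_inj => b; apply: (uniqueness_limite _ _ _ _ (hFD b) (hv b)).
Qed.

Record inner_product_on (V : Cov n -> Prop) (B : Cov n -> Cov n -> R) : Prop := {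
  ip_addl : forall a b c, V a -> V b -> V c -> B (addv a b) c = B a c + B b c;
  ip_scalel : forall t a c, V a -> V c -> B (scalev t a) c = t * B a c;
  ip_sym : forall a b, V a -> V b -> B a b = B b a;
  ip_pos : forall a, V a -> a <> zerov -> 0 < B a a }.

Lemma quad_formP V F :
  quad_form V F ->
  exists2 B, inner_product_on V B & forall a, V a -> F a = / 2 * B a a.
Proof. by move=> [B [BD [BZ [BC [Bpos FB]]]]]; exists B. Qed.

Record complement_projections (W What : Cov n -> Prop) (ph p : Cov n -> Cov n) : Prop := {
  cp_subspace : subspace W;
  cp_subspace_hat : subspace What;
  cp_cap : forall a, What a -> W a -> a = zerov;
  cp_ph : forall a, What (ph a);
  cp_p : forall a, W (p a);
  cp_decomposition : forall a, a = addv (ph a) (p a) }.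

End Vectors.

Section QuadraticForm.
Variables (n : nat) (V : Cov n -> Prop) (B : Cov n -> Cov n -> R) (P : Cov n -> Cov n).
Hypothesis iB : inner_product_on V B.
Hypothesis P_add : forall a b, P (addv a b) = addv (P a) (P b).
Hypothesis P_scale : forall t a, P (scalev t a) = scalev t (P a).
Hypothesis P_range : forall a, V (P a).

Lemma ip_zerol y : V y -> B zerov y = 0.
Proof.
move=> hy; rewrite (_ : zerov = scalev 0 y); last by vec_ring.
by rewrite (ip_scalel iB) //; ring.
Qed.

Lemma ip_zeror y : V zerov -> V y -> B y zerov = 0.
Proof. by move=> h0 hy; rewrite (ip_sym iB) // ip_zerol. Qed.

Lemma ip_self_ge0 x : V x -> 0 <= B x x.
Proof.
move=> hx; have [x0|x_neq0] := classic (x = zerov).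
  by rewrite x0 ip_zerol -?x0 //; lra.
exact/Rlt_le/(ip_pos iB).
Qed.

Lemma ip_self_eq0 x : V x -> B x x = 0 -> x = zerov.
Proof. by move=> hx Bx0; apply: NNPP => x_neq0; have := ip_pos iB hx x_neq0; lra. Qed.

Lemma ip_proj_addl a b c : B (P (addv a c)) (P b) = B (P a) (P b) + B (P c) (P b).
Proof. by rewrite P_add (ip_addl iB). Qed.

Lemma ip_proj_scalel t a b : B (P (scalev t a)) (P b) = t * B (P a) (P b).
Proof. by rewrite P_scale (ip_scalel iB). Qed.

Lemma ip_proj_addr a b c : B (P a) (P (addv b c)) = B (P a) (P b) + B (P a) (P c).
Proof. by rewrite !((ip_sym iB) (P a)) // ip_proj_addl. Qed.

Lemma ip_proj_scaler t a b : B (P a) (P (scalev t b)) = t * B (P a) (P b).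
Proof. by rewrite !((ip_sym iB) (P a)) // ip_proj_scalel. Qed.

Definition quad_gradient a : Vec n := fun j => B (P a) (P (basis j)).

Lemma pairing_quad_gradient a b : pairing b (quad_gradient a) = B (P a) (P b).
Proof.
rewrite (@linear_form_pairing _ (fun b => B (P a) (P b))) // => [x y | t x].
  exact: ip_proj_addr.
exact: ip_proj_scaler.
Qed.

Variable F : Cov n -> R.
Hypothesis FB : forall a, V a -> F a = / 2 * B a a.

Lemma quad_proj_expansion a b t :
  F (P (addv a (scalev t b))) =
  F (P a) + t * pairing b (quad_gradient a) + t * t * (/ 2 * B (P b) (P b)).
Proof.
rewrite !FB // pairing_quad_gradient ip_proj_addl !ip_proj_addr !ip_proj_scalel.
by rewrite !ip_proj_scaler ((ip_sym iB) (P b)) //; field.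
Qed.

Lemma FD_quad_proj a : FD (fun x => F (P x)) a = quad_gradient a.
Proof.
apply: FD_quadratic_expansion => b.
by exists (/ 2 * B (P b) (P b)) => t; rewrite quad_proj_expansion.
Qed.

End QuadraticForm.

Section Complement.
Variables (n : nat) (W What : Cov n -> Prop) (ph p : Cov n -> Cov n).
Hypothesis cpl : complement_projections W What ph p.

Lemma complement_projectionsE a x y :
  What x -> W y -> a = addv x y -> ph a = x /\ p a = y.
Proof.
have [[W0 [WD WZ]] [What0 [WhatD WhatZ]] cap hph hp hdec] := cpl.
move=> hx hy ->; set z := addv x y.
have ei i : ph z i + p z i = x i + y i by rewrite -[LHS]/(addv _ _ i) -hdec.
have dx : addv (ph z) (scalev (-1) x) = zerov.
  apply: cap; first by apply: WhatD => //; apply: WhatZ.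
  rewrite (_ : addv _ _ = addv y (scalev (-1) (p z))).
    by apply: WD => //; apply: WZ.
  by apply: functional_extensionality => i; cbv [addv scalev]; move: (ei i); lra.
have dxi i : ph z i = x i.
  by move: (congr1 (@^~ i) dx); cbv [addv scalev zerov]; lra.
split; apply: functional_extensionality => i; first exact: dxi.
by move: (ei i) (dxi i); lra.
Qed.

Lemma projections_add a b :
  ph (addv a b) = addv (ph a) (ph b) /\ p (addv a b) = addv (p a) (p b).
Proof.
have [[_ [WD _]] [_ [WhatD _]] _ hph hp hdec] := cpl.
apply: complement_projectionsE; [exact: WhatD | exact: WD |].
by rewrite {1}(hdec a) {1}(hdec b); vec_ring.
Qed.

Lemma projections_scale t a :
  ph (scalev t a) = scalev t (ph a) /\ p (scalev t a) = scalev t (p a).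
Proof.
have [[_ [_ WZ]] [_ [_ WhatZ]] _ hph hp hdec] := cpl.
apply: complement_projectionsE; [exact: WhatZ | exact: WZ |].
by rewrite {1}(hdec a); vec_ring.
Qed.

Lemma complement_zero : W zerov.
Proof. by case: (cp_subspace cpl). Qed.

Lemma complement_zero_hat : What zerov.
Proof. by case: (cp_subspace_hat cpl). Qed.

Lemma proj_hat_zero b : W b -> ph b = zerov.
Proof.
move=> hb; have e : b = addv zerov b by vec_ring.
by have [] := complement_projectionsE complement_zero_hat hb e.
Qed.

Lemma proj_id b : W b -> p b = b.
Proof.
move=> hb; have e : b = addv zerov b by vec_ring.
by have [] := complement_projectionsE complement_zero_hat hb e.
Qed.

Lemma proj_zero s : What s -> p s = zerov.
Proof.
move=> hs; have e : s = addv s zerov by vec_ring.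
by have [] := complement_projectionsE hs complement_zero e.
Qed.

End Complement.

Section PotentialEquation.
Variables (n : nat) (W What : Cov n -> Prop) (ph p : Cov n -> Cov n).
Variables (K L : Cov n -> R) (BK BL : Cov n -> Cov n -> R).
Hypothesis cpl : complement_projections W What ph p.
Hypothesis iK : inner_product_on What BK.
Hypothesis iL : inner_product_on W BL.
Hypothesis KB : forall a, What a -> K a = / 2 * BK a a.
Hypothesis LB : forall a, W a -> L a = / 2 * BL a a.

Local Notation Hh := (fun a => K (ph a) + L (p a)).

Let ph_add a b := proj1 (projections_add cpl a b).
Let p_add a b := proj2 (projections_add cpl a b).
Let ph_scale t a := proj1 (projections_scale cpl t a).
Let p_scale t a := proj2 (projections_scale cpl t a).
Let ph_range := cp_ph cpl.
Let p_range := cp_p cpl.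

Lemma pairing_FD_Hh a b : pairing b (FD Hh a) = BK (ph a) (ph b) + BL (p a) (p b).
Proof.
have -> : FD Hh a = addv (quad_gradient BK ph a) (quad_gradient BL p a).
  apply: FD_quadratic_expansion => c.
  exists (/ 2 * BK (ph c) (ph c) + / 2 * BL (p c) (p c)) => t.
  rewrite (quad_proj_expansion iK ph_add ph_scale ph_range KB).
  rewrite (quad_proj_expansion iL p_add p_scale p_range LB) pairing_addr; ring.
by rewrite pairing_addr (pairing_quad_gradient iK ph_add ph_scale ph_range)
  (pairing_quad_gradient iL p_add p_scale p_range).
Qed.

Lemma FD_Hh_linear : linear_fun (FD Hh).
Proof.
split=> [a c | t a]; apply: pairing_inj => b.
  rewrite pairing_addr !pairing_FD_Hh (ip_proj_addl iK ph_add ph_range).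
  by rewrite (ip_proj_addl iL p_add p_range); ring.
rewrite pairing_scaler !pairing_FD_Hh (ip_proj_scalel iK ph_scale ph_range).
by rewrite (ip_proj_scalel iL p_scale p_range); ring.
Qed.

Lemma FD_Hh_eq0 a : FD Hh a = zerov -> a = zerov.
Proof.
move=> Ha0; have := pairing_FD_Hh a a; rewrite Ha0 pairing_zeror => sum0.
have K_ge0 := ip_self_ge0 iK (ph_range a); have L_ge0 := ip_self_ge0 iL (p_range a).
have ph0 : ph a = zerov by apply: (ip_self_eq0 iK (ph_range a)); lra.
have p0 : p a = zerov by apply: (ip_self_eq0 iL (p_range a)); lra.
by rewrite (cp_decomposition cpl a) ph0 p0; vec_ring.
Qed.

Lemma FD_Hh_inj a c : FD Hh a = FD Hh c -> a = c.
Proof.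
have [FD_add FD_scale] := FD_Hh_linear.
move=> eac; have d0 : addv a (scalev (-1) c) = zerov.
  by apply: FD_Hh_eq0; rewrite FD_add FD_scale eac; vec_ring.
apply: functional_extensionality => i.
by move: (congr1 (@^~ i) d0); cbv [addv scalev zerov]; lra.
Qed.

Lemma FD_FDinv_Hh v : FD Hh (FDinv Hh v) = v.
Proof.
exact: (epsilon_spec (inhabits (@zerov n)) _ (linear_inj_surj FD_Hh_linear FD_Hh_eq0 v)).
Qed.

Lemma FDinv_FD_Hh a : FDinv Hh (FD Hh a) = a.
Proof. by apply: FD_Hh_inj; rewrite FD_FDinv_Hh. Qed.

Lemma annihilator_FD_Hh a : annihilator W (FD Hh a) <-> What a.
Proof.
split=> [annW | ha b hb].
  have := annW _ (p_range a).
  rewrite pairing_FD_Hh (proj_hat_zero cpl (p_range a)) (proj_id cpl (p_range a)).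
  rewrite (ip_zeror iK (complement_zero_hat cpl) (ph_range a)) Rplus_0_l => pp0.
  rewrite (cp_decomposition cpl a) (ip_self_eq0 iL (p_range a) pp0).
  by rewrite (_ : addv _ _ = ph a) //; vec_ring.
rewrite pairing_FD_Hh (proj_hat_zero cpl hb) (proj_zero cpl ha).
rewrite (ip_zeror iK (complement_zero_hat cpl) (ph_range a)).
by rewrite (ip_zerol iL (p_range b)); ring.
Qed.

Lemma annihilator_FDinv_Hh v : annihilator W v <-> What (FDinv Hh v).
Proof. by rewrite -annihilator_FD_Hh FD_FDinv_Hh. Qed.

Lemma FD_Lp_hat s : What s -> FD (fun a => L (p a)) s = zerov.
Proof.
move=> hs; rewrite (FD_quad_proj iL p_add p_scale p_range LB).
apply: pairing_inj => b.
rewrite pairing_zeror (pairing_quad_gradient iL p_add p_scale p_range).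
by rewrite (proj_zero cpl hs) (ip_zerol iL (p_range b)).
Qed.

Lemma FD_Hh_hat s : What s -> FD Hh s = FD (fun a => K (ph a)) s.
Proof.
move=> hs; rewrite (FD_quad_proj iK ph_add ph_scale ph_range KB).
apply: pairing_inj => b.
rewrite pairing_FD_Hh (pairing_quad_gradient iK ph_add ph_scale ph_range).
by rewrite (proj_zero cpl hs) (ip_zerol iL (p_range b)) Rplus_0_r.
Qed.

End PotentialEquation.

Theorem mainTheorem3 (n : nat)
  (W What : Cov n -> Prop) (p ph : Cov n -> Cov n)
  (H K L : Cov n -> R) (dh dhh : Cov n) :
  subspace W -> subspace What ->
  (forall a, What a -> W a -> a = zerov) ->
  (forall a, What (ph a)) -> (forall a, W (p a)) ->
  (forall a, a = addv (ph a) (p a)) ->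
  quad_form fullspace H -> quad_form What K -> quad_form W L ->
  let Hh := fun a => (K (ph a) + L (p a))%R in
  (forall s, What s -> FD (fun a => L (p a)) s = zerov) /\
  ((forall v, annihilator W v ->
      (pairing dhh (FD H (FDinv Hh v)) - pairing dh (FD Hh (FDinv Hh v)))%R = 0%R)
   <->
   (forall s, What s ->
      (pairing dhh (FD H s) - pairing dh (FD (fun a => K (ph a)) s))%R = 0%R)).
Proof.
move=> hW hWh cap hph hp hdec _ /quad_formP[BK iK KB] /quad_formP[BL iL LB] Hh.
have cpl : complement_projections W What ph p by [].
split; first by move=> s; apply: (FD_Lp_hat cpl iL LB).
split=> [potential s hs | hat_eq v annW].
  have := potential _ (proj2 (annihilator_FD_Hh cpl iK iL KB LB s) hs).
  by rewrite (FDinv_FD_Hh cpl iK iL KB LB) (FD_Hh_hat cpl iK iL KB LB hs).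
have hat_v := proj1 (annihilator_FDinv_Hh cpl iK iL KB LB v) annW.
by rewrite (FD_Hh_hat cpl iK iL KB LB hat_v); apply: hat_eq.
Qed.
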